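(* In the single-block Spice setting, fix an iteration $k$ and let $w^*=(x^*,\lambda^* )\in\Omega$ satisfy $\rho[f(x)-f(x^* )]+(w-w^* )^\top\frac{1}{\eta_k}\Gamma(w^* )\ge 0$ for all $w\in\Omega$. Then $$\|w^*-w^k\|_{H_k}^2\ \ge\ \|w^*-w^{k+1}\|_{H_k}^2+\|w^k-\bar w^k\|_{G_k}^2 .$$
   Context: Single-block Spice setting. Let $\mathcal{X}\subseteq\mathbb{R}^n$ be nonempty closed convex, $f:\mathbb{R}^n\to\mathbb{R}$ convex, $\phi_1,\dots,\phi_p:\mathbb{R}^n\to\mathbb{R}$ convex and continuously differentiable, $\Phi(x)=(\phi_1(x),\dots,\phi_p(x))^\top$, $\mathcal{D}\Phi(x)\in\mathbb{R}^{p\times n}$ its Jacobian. Let $\mathcal{Z}=\mathbb{R}^p_+$, $\Omega=\mathcal{X}\times\mathcal{Z}$, $w=(x,\lambda)$, $\Gamma(w)=(\mathcal{D}\Phi(x)^\top\lambda,\,-\Phi(x))$. For a symmetric matrix $A$, $\|v\|_A^2:=v^\top A v$; the norm of a matrix is the spectral norm; $\mathsf{R}(x):=\|\mathcal{D}\Phi(x)\|^2$. The scaled Lagrangian is $\mathcal{L}(x,\lambda,\rho,\eta)=\rho f(x)+\frac1\eta\lambda^\top\Phi(x)$. Fix $\rho>0$, $\mu>1$, a starting point $w^0=(x^0,\lambda^0)\in\Omega$ and positive numbers $\eta_0,\eta_1,\dots$. Given $w^k=(x^k,\lambda^k)\in\Omega$, iteration $k$ is: $r_k=\frac{1}{\eta_k}\sqrt{\mathsf{R}(x^k)}$;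 $\bar x^k=\arg\min_{x\in\mathcal{X}}\{\mathcal{L}(x,\lambda^k,\rho,\eta_k)+\frac{r_k}{2}\|x-x^k\|^2\}$; $s_k=\frac{\mu\,\mathsf{R}(\bar x^k)}{\eta_k\sqrt{\mathsf{R}(x^k)}}$; $\bar\lambda^k=\arg\max_{\lambda\in\mathcal{Z}}\{\mathcal{L}(\bar x^k,\lambda,\rho,\eta_k)-\frac{s_k}{2}\|\lambda-\lambda^k\|^2\}$ (equivalently $\bar\lambda^k=\max\{\lambda^k+\frac{1}{\eta_k s_k}\Phi(\bar x^k),0\}$ componentwise); $\bar w^k=(\bar x^k,\bar\lambda^k)$; and $w^{k+1}=w^k-M_k(w^k-\bar w^k)$ where $M_k=\begin{pmatrix}I_n & -\frac{1}{\eta_k r_k}\mathcal{D}\Phi(\bar x^k)^\top\\ 0 & I_p\end{pmatrix}$. It is assumed throughout that $\mathsf{R}(x^k)>0$ and $\mathsf{R}(\bar x^k)>0$ for all $k$. Define $Q_k=\begin{pmatrix} r_kI_n & -\frac{1}{\eta_k}\mathcal{D}\Phi(\bar x^k)^\top\\ 0 & s_kI_p\end{pmatrix}$, $H_k=\begin{pmatrix} r_kI_n&0\\0&s_kI_p\end{pmatrix}$, $G_k=\begin{pmatrix} r_kI_n&0\\0&s_kI_p-\frac{1}{\eta_k^2r_k}\mathcal{D}\Phi(\bar x^k)\mathcal{D}\Phi(\bar x^k)^\top\end{pmatrix}$. *)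

From HB Require Import structures.
From mathcomp Require Import all_boot all_order all_algebra.
From mathcomp Require Import all_classical all_reals all_analysis.
Set Implicit Arguments. Unset Strict Implicit. Unset Printing Implicit Defensive.
Import Order.TTheory GRing.Theory Num.Theory.
Import numFieldNormedType.Exports.
Local Open Scope classical_set_scope.
Local Open Scope ring_scope.

Section SpiceDefs.
Variable R : realType.

Definition qform (m : nat) (A : 'M[R]_m) (v : 'cV[R]_m) : R :=
  (v^T *m A *m v) 0 0.

Definition dotv (m : nat) (u v : 'cV[R]_m) : R := (u^T *m v) 0 0.
Definition sqnorm (m : nat) (v : 'cV[R]_m) : R := dotv v v.
Definition enorm (m : nat) (v : 'cV[R]_m) : R := Num.sqrt (sqnorm v).

Definition specnorm (p n : nat) (A : 'M[R]_(p, n)) : R :=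
  sup [set enorm (A *m v) | v in [set v : 'cV[R]_n | enorm v <= 1]].

Definition C1_with_jacobian (n p : nat) (Phi : 'cV[R]_n -> 'cV[R]_p)
  (DPhi : 'cV[R]_n -> 'M[R]_(p, n)) : Prop :=
  (forall x, differentiable Phi x /\ ('d Phi x : 'cV[R]_n -> 'cV[R]_p) =1 (fun h => DPhi x *m h))
  /\ continuous DPhi.

Definition nonneg_orthant (p : nat) : set 'cV[R]_p :=
  [set l | forall i, 0 <= l i 0].

Definition scaledL (n p : nat) (f : 'cV[R]_n -> R) (Phi : 'cV[R]_n -> 'cV[R]_p)
  (x : 'cV[R]_n) (l : 'cV[R]_p) (rho eta : R) : R :=
  rho * f x + eta^-1 * dotv l (Phi x).

Definition Gamma (n p : nat) (Phi : 'cV[R]_n -> 'cV[R]_p)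
  (DPhi : 'cV[R]_n -> 'M[R]_(p, n)) (x : 'cV[R]_n) (l : 'cV[R]_p) : 'cV[R]_(n + p) :=
  col_mx ((DPhi x)^T *m l) (- Phi x).

Definition Rfun (n p : nat) (DPhi : 'cV[R]_n -> 'M[R]_(p, n)) (x : 'cV[R]_n) : R :=
  specnorm (DPhi x) ^+ 2.

End SpiceDefs.

(* Write d = w^k - w̄^k.  Since H_k M_k = Q_k and G_k = Q_k^T + Q_k - M_k^T H_k M_k,
   the correction step w^{k+1} = w^k - M_k d satisfies
     ‖w⋆ - w^k‖²_H - ‖w⋆ - w^{k+1}‖²_H - ‖d‖²_G = 2 (w⋆ - w̄^k)^T Q_k (w̄^k - w^k),
   so it suffices that this cross term is nonnegative.  Expanding Q_k, it is the sum of
   the first-order optimality conditions of the two subproblems, tested at w⋆, and of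
   ρ(f(x̄^k) - f(x⋆)) + η_k^{-1} (w̄^k - w⋆)^T Γ(w̄^k).  The latter is nonnegative by the
   variational inequality at w̄^k, because Γ is monotone on Ω: the φ_i are convex and
   the multipliers are nonnegative. *)

From HB Require Import structures.
From mathcomp Require Import all_boot all_order all_algebra.
From mathcomp Require Import all_classical all_reals all_analysis.
From mathcomp Require Import ring lra.
Import Order.TTheory GRing.Theory Num.Theory.
Import numFieldNormedType.Exports.
Local Open Scope classical_set_scope.
Local Open Scope ring_scope.
Local Open Scope convex_scope.
Set Implicit Arguments. Unset Strict Implicit. Unset Printing Implicit Defensive.

Section InnerProduct.
Variable R : realType.
Implicit Types (m k : nat).

Lemma dotvE m (u v : 'cV[R]_m) : dotv u v = \sum_i u i 0 * v i 0.
Proof. by rewrite /dotv !mxE; apply: eq_bigr => i _; rewrite mxE. Qed.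

Lemma dotvC m (u v : 'cV[R]_m) : dotv u v = dotv v u.
Proof. by rewrite !dotvE; apply: eq_bigr => i _; rewrite mulrC. Qed.

Lemma dotvDr m (u v w : 'cV[R]_m) : dotv u (v + w) = dotv u v + dotv u w.
Proof. by rewrite /dotv mulmxDr mxE. Qed.

Lemma dotvDl m (u v w : 'cV[R]_m) : dotv (v + w) u = dotv v u + dotv w u.
Proof. by rewrite dotvC dotvDr !(dotvC _ u). Qed.

Lemma dotvZr m a (u v : 'cV[R]_m) : dotv u (a *: v) = a * dotv u v.
Proof. by rewrite /dotv -scalemxAr mxE. Qed.

Lemma dotvZl m a (u v : 'cV[R]_m) : dotv (a *: v) u = a * dotv v u.
Proof. by rewrite dotvC dotvZr dotvC. Qed.

Lemma dotvNr m (u v : 'cV[R]_m) : dotv u (- v) = - dotv u v.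
Proof. by rewrite -scaleN1r dotvZr mulN1r. Qed.

Lemma dotvNl m (u v : 'cV[R]_m) : dotv (- v) u = - dotv v u.
Proof. by rewrite dotvC dotvNr dotvC. Qed.

Lemma dotvBr m (u v w : 'cV[R]_m) : dotv u (v - w) = dotv u v - dotv u w.
Proof. by rewrite dotvDr dotvNr. Qed.

Lemma dotvBl m (u v w : 'cV[R]_m) : dotv (v - w) u = dotv v u - dotv w u.
Proof. by rewrite dotvDl dotvNl. Qed.

Lemma dotv_mulTmx m k (A : 'M[R]_(k, m)) (u : 'cV[R]_m) (v : 'cV[R]_k) :
  dotv u (A^T *m v) = dotv v (A *m u).
Proof. by rewrite [RHS]dotvC /dotv trmx_mul mulmxA. Qed.

Lemma dotv_col_mx m k (u u' : 'cV[R]_m) (v v' : 'cV[R]_k) :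
  dotv (col_mx u v) (col_mx u' v') = dotv u u' + dotv v v'.
Proof. by rewrite /dotv tr_col_mx mul_row_col mxE. Qed.

Lemma sqnorm_scale_add m t (u v : 'cV[R]_m) :
  sqnorm (t *: u + v) = sqnorm v + 2 * t * dotv u v + t ^+ 2 * sqnorm u.
Proof. by rewrite /sqnorm dotvDl !dotvDr !dotvZl !dotvZr (dotvC v u); ring. Qed.

Lemma dotv_continuous m (l : 'cV[R]_m) : continuous (dotv l).
Proof.
have -> : dotv l = (fun v => \sum_i l i 0 * v i 0) by apply/funext => v; rewrite dotvE.
apply: continuous_big => [|i _]; first exact: add_continuous.
by move=> v; apply: continuous_comp; [exact: coord_continuous | exact: mulrl_continuous].
Qed.

End InnerProduct.

Section BilinearForm.
Variable R : realType.

Definition bform m (A : 'M[R]_m) (u v : 'cV[R]_m) : R := (u^T *m A *m v) 0 0.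

Lemma qformE m (A : 'M[R]_m) v : qform A v = bform A v v.
Proof. by []. Qed.

Lemma bformDl m (A : 'M[R]_m) u u' v : bform A (u + u') v = bform A u v + bform A u' v.
Proof. by rewrite /bform linearD !mulmxDl mxE. Qed.

Lemma bformDr m (A : 'M[R]_m) u v v' : bform A u (v + v') = bform A u v + bform A u v'.
Proof. by rewrite /bform mulmxDr mxE. Qed.

Lemma bformNl m (A : 'M[R]_m) u v : bform A (- u) v = - bform A u v.
Proof. by rewrite /bform linearN !mulNmx mxE. Qed.

Lemma bformNr m (A : 'M[R]_m) u v : bform A u (- v) = - bform A u v.
Proof. by rewrite /bform mulmxN mxE. Qed.

Lemma bformDm m (A B : 'M[R]_m) u v : bform (A + B) u v = bform A u v + bform B u v.
Proof. by rewrite /bform mulmxDr mulmxDl mxE. Qed.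

Lemma bformBm m (A B : 'M[R]_m) u v : bform (A - B) u v = bform A u v - bform B u v.
Proof. by rewrite bformDm /bform mulmxN mulNmx [X in _ + X]mxE. Qed.

Lemma bform_mulmxr m (A M : 'M[R]_m) u v : bform A u (M *m v) = bform (A *m M) u v.
Proof. by rewrite /bform !mulmxA. Qed.

Lemma bform_mulmxl m (A M : 'M[R]_m) u v : bform A (M *m u) v = bform (M^T *m A) u v.
Proof. by rewrite /bform trmx_mul !mulmxA. Qed.

Lemma bform_trmx m (A : 'M[R]_m) u v : bform A^T u v = bform A v u.
Proof. by rewrite /bform -[v]trmxK -!trmx_mul mxE trmxK mulmxA. Qed.

Lemma bform_scalar_mx m a (u v : 'cV[R]_m) : bform a%:M u v = a * dotv u v.
Proof. by rewrite /bform mul_mx_scalar -scalemxAl mxE. Qed.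

Lemma bform_block_mx m k (A : 'M[R]_m) (B : 'M[R]_(m, k)) (C : 'M[R]_(k, m))
    (E : 'M[R]_k) u v u' v' :
  bform (block_mx A B C E) (col_mx u v) (col_mx u' v')
  = bform A u u' + dotv u (B *m v') + dotv v (C *m u') + bform E v v'.
Proof.
have entryD (X Y : 'M[R]_1) : (X + Y) 0 0 = X 0 0 + Y 0 0 by rewrite mxE.
rewrite /bform /dotv tr_col_mx mul_row_block mul_row_col !mulmxDl !mulmxA !entryD.
by rewrite addrACA addrA.
Qed.

Lemma qform_correction_contraction m (H M Q G : 'M[R]_m) (ws wk wbar : 'cV[R]_m) :
  H^T = H -> H *m M = Q -> G = Q^T + Q - M^T *m H *m M ->
  0 <= bform Q (ws - wbar) (wbar - wk) ->
  qform H (ws - (wk - M *m (wk - wbar))) + qform G (wk - wbar) <= qform H (ws - wk).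
Proof.
move=> HT HM ->; rewrite -[ws - wbar]opprB -[wbar - wk]opprB bformNl bformNr opprK.
set d := wk - wbar; set v := wbar - ws.
have vd : - (v + d) = ws - wk by rewrite /v /d opprD !opprB addrA subrK.
have -> : ws - (wk - M *m d) = M *m d - (v + d) by rewrite vd opprB addrCA.
rewrite -vd; clearbody d v => Qvd.
have HMd y : bform H (M *m d) y = bform Q y d.
  by rewrite bform_mulmxl -bform_trmx trmx_mul trmxK HT HM.
have Hsym x y : bform H x y = bform H y x by rewrite -bform_trmx HT.
rewrite !qformE !(bformDl, bformDr, bformNl, bformNr) !bform_mulmxr !HMd.
rewrite bform_mulmxl -mulmxA HM bformBm bformDm bform_trmx (Hsym d v).
lra.
Qed.

End BilinearForm.

Section SpiceMatrices.
Variables (R : realType) (n p : nat) (eta r s : R) (D : 'M[R]_(p, n)).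

(* The paper's H_k, M_k, Q_k and G_k, with r = r_k, s = s_k and D = DΦ(x̄^k). *)

Definition spiceH : 'M[R]_(n + p) := block_mx r%:M 0 0 s%:M.
Definition spiceM : 'M[R]_(n + p) := block_mx 1%:M (- (eta * r)^-1 *: D^T) 0 1%:M.
Definition spiceQ : 'M[R]_(n + p) := block_mx r%:M (- eta^-1 *: D^T) 0 s%:M.
Definition spiceG : 'M[R]_(n + p) :=
  block_mx r%:M 0 0 (s%:M - (eta ^+ 2 * r)^-1 *: (D *m D^T)).

Lemma bform_spiceQ u v u' v' :
  bform spiceQ (col_mx u v) (col_mx u' v')
  = r * dotv u u' - eta^-1 * dotv v' (D *m u) + s * dotv v v'.
Proof.
have dotv0 : dotv v 0 = 0 by rewrite /dotv mulmx0 mxE.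
rewrite bform_block_mx !bform_scalar_mx mul0mx dotv0 -scalemxAl dotvZr dotv_mulTmx.
by rewrite addr0 mulNr.
Qed.

Hypotheses (eta_neq0 : eta != 0) (r_neq0 : r != 0).

Lemma trmx_spiceH : spiceH^T = spiceH.
Proof. by rewrite /spiceH tr_block_mx !tr_scalar_mx !trmx0. Qed.

Lemma spiceH_mulM : spiceH *m spiceM = spiceQ.
Proof.
rewrite /spiceH /spiceM /spiceQ mulmx_block !mulmx0 !mul0mx !mulmx1 !addr0 !add0r.
rewrite mul_scalar_mx scalerA.
by have -> : r * - (eta * r)^-1 = - eta^-1 by field; rewrite eta_neq0 r_neq0.
Qed.

Lemma spiceG_decomposition : spiceG = spiceQ^T + spiceQ - spiceM^T *m spiceH *m spiceM.
Proof.
rewrite /spiceG /spiceQ /spiceM /spiceH !tr_block_mx !tr_scalar_mx !trmx0 !linearZ /= trmxK.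
rewrite !mulmx_block !mulmx0 !mul0mx !mul1mx !mulmx1 !addr0 !add0r.
rewrite !mul_mx_scalar -!scalemxAl !scalerA opp_block_mx !add_block_mx.
rewrite mul_scalar_mx -scalemxAr scalerA.
by congr block_mx; apply/matrixP => i j; rewrite !mxE; field; rewrite ?eta_neq0 ?r_neq0.
Qed.

End SpiceMatrices.

Section Segments.
Variables (R : realType) (E : lmodType R).

Lemma conv_segment (x y : convex_lmodType E) (t : {i01 R}) :
  y <| t |> x = t%:num *: (y - x) + x.
Proof.
transitivity (t%:num *: y + (1 - t%:num) *: x); first by [].
by rewrite scalerBr scalerBl scale1r addrA addrAC.
Qed.

Lemma convex_set_segment (X : set E) (x y : E) (t : R) :
  convex_set X -> X x -> X y -> 0 <= t -> t <= 1 -> X (t *: (y - x) + x).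
Proof.
move=> cX Xx Xy t0 t1.
by have := cX y x (Itv01 t0 t1) (mem_set Xy) (mem_set Xx); rewrite inE conv_segment.
Qed.

Lemma convex_function_segment (g : E -> R) (x y : E) (t : R) :
  convex_function setT g -> 0 <= t -> t <= 1 ->
  g (t *: (y - x) + x) <= g x + t * (g y - g x).
Proof.
move=> cg t0 t1.
have := cg (Itv01 t0 t1) y x (mem_set I) (mem_set I); rewrite conv_segment => cvx.
have : g (t *: (y - x) + x) <= t * g y + (1 - t) * g x := cvx.
lra.
Qed.

End Segments.

Section OneSidedLimits.
Variable R : realType.

Lemma ge_cvg_at_right (g : R -> R) (L c K : R) : g @ 0^'+ --> L ->
  (forall t, 0 < t <= 1 -> c <= g t + K * t) -> c <= L.
Proof.
move=> gL gc.
have : (fun t => g t + K * t) @ 0^'+ --> L + K * 0.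
  apply: cvgD => //; apply: cvgM; first exact: cvg_cst.
  exact/cvg_at_right_filter/cvg_id.
rewrite mulr0 addr0 => gKL.
apply: (closed_cvg (fun y => c <= y)) gKL; first exact: closed_ge.
near=> t; apply: gc; apply/andP; split.
  by near: t; exact: nbhs_right_gt.
by near: t; apply: nbhs_right_le; exact: ltr01.
Unshelve. all: by end_near.
Qed.

Lemma le_cvg_at_right (g : R -> R) (L c K : R) : g @ 0^'+ --> L ->
  (forall t, 0 < t <= 1 -> g t <= c + K * t) -> L <= c.
Proof.
move=> gL gc; rewrite -lerN2; apply: (ge_cvg_at_right (K := K) (cvgN gL)) => t /gc gt.
by have -> : (- g) t = - g t by []; lra.
Qed.

End OneSidedLimits.

Section Jacobian.
Variables (R : realType) (n p : nat).
Implicit Types (Phi : 'cV[R]_n -> 'cV[R]_p) (A : 'M[R]_(p, n)) (x y h : 'cV[R]_n) (l : 'cV[R]_p).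

Definition is_jacobian Phi x A :=
  differentiable Phi x /\ ('d Phi x : 'cV[R]_n -> 'cV[R]_p) =1 (fun h => A *m h).

Lemma dotv_diff_quotient_cvg Phi x A h l :
  is_jacobian Phi x A ->
  (fun t : R => t^-1 * (dotv l (Phi (t *: h + x)) - dotv l (Phi x))) @ 0^'+
    --> dotv l (A *m h).
Proof.
move=> [dPhi dPhiE].
pose quot (t : R) := t^-1 *: (Phi (t *: h + x) - Phi x).
have quot_cvg : quot @ 0^' --> A *m h.
  by rewrite -dPhiE -deriveE //; exact: diff_derivable.
have quot_cvg_right : quot @ 0^'+ --> A *m h.
  by apply: cvg_trans quot_cvg; apply: cvg_app; apply: within_subset => t /lt0r_neq0.
have -> : (fun t => t^-1 * (dotv l (Phi (t *: h + x)) - dotv l (Phi x))) = dotv l \o quot.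
  by apply/funext => t; rewrite /quot /= dotvZr dotvBr.
exact: continuous_cvg (@dotv_continuous R p l (A *m h)) quot_cvg_right.
Qed.

Lemma jacobian_subgradient Phi x y A l :
  (forall i, convex_function setT (fun x => Phi x i 0)) -> is_jacobian Phi x A ->
  nonneg_orthant l ->
  dotv l (A *m (y - x)) <= dotv l (Phi y) - dotv l (Phi x).
Proof.
move=> cvxPhi jac l_ge0.
apply: (le_cvg_at_right (K := 0) (dotv_diff_quotient_cvg jac)).
move=> t /andP[t_gt0 t_le1].
have cvx_dotv : dotv l (Phi (t *: (y - x) + x))
               <= dotv l (Phi x) + t * (dotv l (Phi y) - dotv l (Phi x)).
  rewrite !dotvE -sumrB mulr_sumr -big_split /=; apply: ler_sum => i _.
  have := convex_function_segment x y (cvxPhi i) (ltW t_gt0) t_le1.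
  by have := l_ge0 i; nra.
by rewrite mul0r addr0 ler_pdivrMl //; lra.
Qed.

End Jacobian.

Section Gamma.
Variables (R : realType) (n p : nat) (Phi : 'cV[R]_n -> 'cV[R]_p)
  (DPhi : 'cV[R]_n -> 'M[R]_(p, n)).

Lemma dotv_Gamma (u : 'cV[R]_n) (v : 'cV[R]_p) x l :
  dotv (col_mx u v) (Gamma Phi DPhi x l) = dotv l (DPhi x *m u) - dotv v (Phi x).
Proof. by rewrite /Gamma dotv_col_mx dotv_mulTmx dotvNr. Qed.

Lemma Gamma_monotone x x' l l' :
  (forall i, convex_function setT (fun x => Phi x i 0)) ->
  is_jacobian Phi x (DPhi x) -> is_jacobian Phi x' (DPhi x') ->
  nonneg_orthant l -> nonneg_orthant l' ->
  0 <= dotv (col_mx x l - col_mx x' l') (Gamma Phi DPhi x l - Gamma Phi DPhi x' l').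
Proof.
move=> cvxPhi jac jac' l_ge0 l'_ge0.
have sub := jacobian_subgradient x' cvxPhi jac l_ge0.
have sub' := jacobian_subgradient x cvxPhi jac' l'_ge0.
rewrite -opprB mulmxN dotvNr in sub.
rewrite opp_col_mx add_col_mx dotvBr !dotv_Gamma !dotvBl.
lra.
Qed.

End Gamma.

Section FirstOrderConditions.
Variables (R : realType) (n p : nat) (f : 'cV[R]_n -> R) (Phi : 'cV[R]_n -> 'cV[R]_p)
  (rho eta : R).

Lemma scaledL_argmin_first_order (X : set 'cV[R]_n) (A : 'M[R]_(p, n)) (r : R)
    (xk z y : 'cV[R]_n) (l : 'cV[R]_p) :
  convex_set X -> convex_function setT f -> 0 <= rho -> is_jacobian Phi z A -> X z ->
  (forall x, X x -> scaledL f Phi z l rho eta + r / 2 * sqnorm (z - xk)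
                    <= scaledL f Phi x l rho eta + r / 2 * sqnorm (x - xk)) ->
  X y ->
  0 <= rho * (f y - f z) + eta^-1 * dotv l (A *m (y - z)) + r * dotv (y - z) (z - xk).
Proof.
move=> cvxX cvxf rho_ge0 jac Xz z_min Xy.
(* f is merely convex: its increment along the segment is bounded by convexity, and
   only the Φ-part of the objective is passed to the limit. *)
pose quot t := t^-1 * (dotv l (Phi (t *: (y - z) + z)) - dotv l (Phi z)).
apply: (@ge_cvg_at_right _
  (fun t => rho * (f y - f z) + eta^-1 * quot t + r * dotv (y - z) (z - xk)) _ _
  (r / 2 * sqnorm (y - z))).
  apply: cvgD; last exact: cvg_cst.
  apply: cvgD; first exact: cvg_cst.
  by apply: cvgM; [exact: cvg_cst | exact: dotv_diff_quotient_cvg].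
move=> t /andP[t_gt0 t_le1].
have := z_min _ (convex_set_segment cvxX Xz Xy (ltW t_gt0) t_le1).
rewrite /scaledL -[_ + z - xk]addrA sqnorm_scale_add => zt_ge.
have f_cvx := ler_wpM2l rho_ge0 (convex_function_segment z y cvxf (ltW t_gt0) t_le1).
have t_quot : t * (eta^-1 * quot t)
              = eta^-1 * (dotv l (Phi (t *: (y - z) + z)) - dotv l (Phi z)).
  by rewrite /quot mulrCA mulVKf ?gt_eqF.
rewrite -(pmulr_rge0 _ t_gt0); lra.
Qed.

Lemma scaledL_argmax_first_order (x : 'cV[R]_n) (s : R) (lk lbar l : 'cV[R]_p) :
  nonneg_orthant lbar ->
  (forall l, nonneg_orthant l ->
     scaledL f Phi x l rho eta - s / 2 * sqnorm (l - lk)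
     <= scaledL f Phi x lbar rho eta - s / 2 * sqnorm (lbar - lk)) ->
  nonneg_orthant l ->
  eta^-1 * dotv (l - lbar) (Phi x) <= s * dotv (l - lbar) (lbar - lk).
Proof.
move=> lbar_ge0 lbar_max l_ge0; rewrite -subr_le0.
apply: (le_cvg_at_right (K := s / 2 * sqnorm (l - lbar)) (cvg_cst _)).
move=> t /andP[t_gt0 t_le1].
have lt_ge0 : nonneg_orthant (t *: (l - lbar) + lbar).
  by move=> i; rewrite !mxE; have := l_ge0 i; have := lbar_ge0 i; nra.
have := lbar_max _ lt_ge0.
rewrite /scaledL -[_ + lbar - lk]addrA sqnorm_scale_add [dotv (_ + lbar) _]dotvDl dotvZl.
move=> lt_le.
by rewrite -(ler_pM2l t_gt0); lra.
Qed.

End FirstOrderConditions.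

Theorem theorem3p1 (R : realType) (n p : nat)
  (X : set 'cV[R]_n) (f : 'cV[R]_n -> R)
  (Phi : 'cV[R]_n -> 'cV[R]_p) (DPhi : 'cV[R]_n -> 'M[R]_(p, n))
  (rho mu eta : R)
  (xk : 'cV[R]_n) (lk : 'cV[R]_p)
  (xbar : 'cV[R]_n) (lbar : 'cV[R]_p)
  (xs : 'cV[R]_n) (ls : 'cV[R]_p) :
  X !=set0 -> closed X -> convex_set X ->
  convex_function setT f ->
  (forall i : 'I_p, convex_function setT (fun x => Phi x i 0)) ->
  C1_with_jacobian Phi DPhi ->
  0 < rho -> 1 < mu -> 0 < eta ->
  X xk -> nonneg_orthant lk ->
  0 < Rfun DPhi xk ->
  let rk := eta^-1 * Num.sqrt (Rfun DPhi xk) in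
  X xbar ->
  (forall x, X x ->
     scaledL f Phi xbar lk rho eta + rk / 2 * sqnorm (xbar - xk)
     <= scaledL f Phi x lk rho eta + rk / 2 * sqnorm (x - xk)) ->
  0 < Rfun DPhi xbar ->
  let sk := mu * Rfun DPhi xbar / (eta * Num.sqrt (Rfun DPhi xk)) in
  nonneg_orthant lbar ->
  (forall l, nonneg_orthant l ->
     scaledL f Phi xbar l rho eta - sk / 2 * sqnorm (l - lk)
     <= scaledL f Phi xbar lbar rho eta - sk / 2 * sqnorm (lbar - lk)) ->
  let wk : 'cV[R]_(n + p) := col_mx xk lk in
  let wbar : 'cV[R]_(n + p) := col_mx xbar lbar in
  let Mk : 'M[R]_(n + p) :=
    block_mx 1%:M (- (eta * rk)^-1 *: (DPhi xbar)^T) 0 1%:M in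
  let wk1 : 'cV[R]_(n + p) := wk - Mk *m (wk - wbar) in
  let Hk : 'M[R]_(n + p) := block_mx (rk%:M) 0 0 (sk%:M) in
  let Gk : 'M[R]_(n + p) :=
    block_mx (rk%:M) 0 0
      (sk%:M - (eta ^+ 2 * rk)^-1 *: (DPhi xbar *m (DPhi xbar)^T)) in
  X xs -> nonneg_orthant ls ->
  let ws : 'cV[R]_(n + p) := col_mx xs ls in
  (forall x l, X x -> nonneg_orthant l ->
     0 <= rho * (f x - f xs)
          + dotv (col_mx x l - ws) (eta^-1 *: Gamma Phi DPhi xs ls)) ->
  qform Hk (ws - wk) >= qform Hk (ws - wk1) + qform Gk (wk - wbar).
Proof.
move=> _ _ cvxX cvxf cvxPhi [jac _] rho_gt0 _ eta_gt0 _ _ Rxk_gt0 rk Xxbar xbar_min _ sk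
  lbar_ge0 lbar_max wk wbar Mk wk1 Hk Gk Xxs ls_ge0 ws VI.
have rk_gt0 : 0 < rk by rewrite mulr_gt0 ?invr_gt0 ?sqrtr_gt0.
have etaV_gt0 : 0 < eta^-1 by rewrite invr_gt0.
have [eta_neq0 rk_neq0] := (lt0r_neq0 eta_gt0, lt0r_neq0 rk_gt0).
apply: (qform_correction_contraction (Q := spiceQ eta rk sk (DPhi xbar))).
- exact: trmx_spiceH.
- exact: spiceH_mulM.
- exact: spiceG_decomposition.
rewrite /wk /wbar /ws !opp_col_mx !add_col_mx bform_spiceQ.
have primal := scaledL_argmin_first_order cvxX cvxf (ltW rho_gt0) (jac xbar) Xxbar xbar_min Xxs.
have dual := scaledL_argmax_first_order lbar_ge0 lbar_max ls_ge0.
have := VI _ _ Xxbar lbar_ge0.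
have := Gamma_monotone cvxPhi (jac xbar) (jac xs) lbar_ge0 ls_ge0.
rewrite /ws opp_col_mx add_col_mx dotvZr dotvBr !dotv_Gamma.
rewrite -[xbar - xs]opprB -[lbar - ls]opprB !mulmxN !dotvNr !dotvNl => mon VIbar.
have := mulr_ge0 (ltW etaV_gt0) mon.
rewrite [dotv (lbar - lk) _]dotvBl; lra.
Qed.
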